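(* Let $(\Omega,\mathcal F,\mu)$ be a measure space, $p\in[1,\infty)$, $f\in L^p(\Omega,\mathcal F,\mu)$, and $1\le m<k$ integers. If there exists $g\in\mathscr G_{p,m}$ with $\|f-g\|_p=\mathscr D_{p,k}(f)$, then $f\in\mathscr G_{p,m}$ (i.e. $f$ coincides $\mu$-a.e. with an element of $\mathscr G_{p,m}$).
   Context: All measures are assumed not identically zero. $\mathscr G_{p,k}$ is the set of functions $\sum_{i=1}^l a_i\mathbf 1_{A_i}\in L^p$ with $l\le k$, $\{A_i\}$ a measurable partition of $\Omega$, $a_i\in\mathbb R$; $\mathscr D_{p,k}(f)=\inf\{\|f-h\|_p:\ h\in\mathscr G_{p,k}\}$. *)

From HB Require Import structures.
From mathcomp Require Import all_boot all_order all_algebra.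
From mathcomp Require Import all_classical all_reals all_analysis.
Set Implicit Arguments. Unset Strict Implicit. Unset Printing Implicit Defensive.
Import Order.TTheory GRing.Theory Num.Theory.
Local Open Scope classical_set_scope.
Local Open Scope ring_scope.

Definition inLp {d} {T : measurableType d} {R : realType}
  (mu : {measure set T -> \bar R}) (p : R) (f : T -> R) : Prop :=
  measurable_fun [set: T] f /\ (Lnorm mu p%:E (EFin \o f) < +oo)%E.

Definition Gpk {d} {T : measurableType d} {R : realType}
  (mu : {measure set T -> \bar R}) (p : R) (k : nat) (h : T -> R) : Prop :=
  inLp mu p h /\
  exists (l : nat) (A : 'I_l -> set T) (a : 'I_l -> R),
    [/\ (l <= k)%N,
        (forall i, measurable (A i)),
        (forall i j, i != j -> A i `&` A j = set0),
        (\bigcup_(i in [set: 'I_l]) A i = [set: T]) &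
        (h = fun x => \sum_(i < l) a i * \1_(A i) x)].

Definition Dpk {d} {T : measurableType d} {R : realType}
  (mu : {measure set T -> \bar R}) (p : R) (k : nat) (f : T -> R) : \bar R :=
  ereal_inf [set Lnorm mu p%:E (EFin \o (f \- h)) | h in Gpk mu p k].

From mathcomp Require Import all_boot all_order all_algebra all_classical all_reals all_analysis.
From mathcomp Require Import measurable_realfun lra.

(* If [f] is not a.e. equal to the optimal [g], then on some cell [A i] of [g]
   the function [f] stays at least [1/(n+1)] above (or below) the value [a i] on
   a set [B] of positive measure. Splitting [B] off as a new cell and shifting the
   value there by [1/(n+1)] towards [f] gives a step function with at most
   [m + 1 <= k] cells which is pointwise no farther from [f] and closer by
   [1/(n+1)] on [B]; its L^p distance to [f] is then strictly below
   [D_{p,k}(f)], a contradiction. *)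

Set Implicit Arguments. Unset Strict Implicit. Unset Printing Implicit Defensive.
Import Order.TTheory GRing.Theory Num.Theory.
Local Open Scope classical_set_scope.
Local Open Scope ring_scope.

Lemma powR_superadditive (R : realType) (p u v : R) : 1 <= p -> 0 <= u -> 0 <= v ->
  u `^ p + v `^ p <= (u + v) `^ p.
Proof.
move=> p1 u0 v0.
have p0 : 0 < p by apply: lt_le_trans p1.
have q0 : 0 <= p - 1 by rewrite subr_ge0.
have uv0 : 0 <= u + v by rewrite addr_ge0.
rewrite -(mulr_powRB1 u0 p0) -(mulr_powRB1 v0 p0) -(mulr_powRB1 uv0 p0) mulrDl.
by rewrite lerD // ler_wpM2l // ge0_ler_powR // ?nnegrE // (lerDl, lerDr).
Qed.

Lemma normB_addr_le (R : realDomainType) (t c : R) :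
  0 <= c * t -> `|c| <= `|t| -> `|t - c| + `|c| <= `|t|.
Proof.
have [t0|t0] := lerP 0 t; have [c0|c0] := lerP 0 c; have [d0|d0] := lerP 0 (t - c);
  rewrite ?(ger0_norm t0) ?(ltr0_norm t0) ?(ger0_norm c0) ?(ltr0_norm c0)
    ?(ger0_norm d0) ?(ltr0_norm d0); nra.
Qed.

Lemma sum_indic_cell (T : Type) (R : pzRingType) (l : nat) (A : 'I_l -> set T)
    (a : 'I_l -> R) (j : 'I_l) (x : T) :
  (forall i j, i != j -> A i `&` A j = set0) -> A j x ->
  \sum_(i < l) a i * \1_(A i) x = a j.
Proof.
move=> disA Ajx; rewrite (bigD1 j) //= indicE mem_set // mulr1 big1 ?addr0 // => i ij.
rewrite indicE memNset ?mulr0 // => Aix.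
by have := disA i j ij; rewrite -subset0 => /(_ x); apply; split.
Qed.

Section StepFunctions.
Context d (T : measurableType d) (R : pzRingType).

Definition is_step_fun {l : nat} (A : 'I_l -> set T) (a : 'I_l -> R) (h : T -> R) :=
  [/\ (forall i, measurable (A i)),
      (forall i j, i != j -> A i `&` A j = set0),
      \bigcup_(i in [set: 'I_l]) A i = [set: T] &
      h = fun x => \sum_(i < l) a i * \1_(A i) x].

Lemma is_step_fun_of_values (l : nat) (A : 'I_l -> set T) (a : 'I_l -> R) (h : T -> R) :
  (forall i, measurable (A i)) ->
  (forall i j, i != j -> A i `&` A j = set0) ->
  (forall x, exists j, A j x) ->
  (forall j x, A j x -> h x = a j) -> is_step_fun A a h.
Proof.
move=> mA disA covA hA; split => //.
  by apply/seteqP; split => // x _; have [j Ajx] := covA x; exists j.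
apply/funext => x; have [j Ajx] := covA x.
by rewrite (hA j x Ajx) (sum_indic_cell a disA Ajx).
Qed.

Section StepFunEval.
Variables (l : nat) (A : 'I_l -> set T) (a : 'I_l -> R) (h : T -> R).
Hypothesis hA : is_step_fun A a h.

Lemma step_fun_cover x : exists j, A j x.
Proof.
have [_ _ covA _] := hA; have : [set: T] x by [].
by rewrite -covA => -[j _ Ajx]; exists j.
Qed.

Lemma step_fun_eval j x : A j x -> h x = a j.
Proof. by have [_ disA _ ->] := hA; exact: sum_indic_cell. Qed.

End StepFunEval.

Lemma is_step_fun_addr_indic (l : nat) (A : 'I_l -> set T) (a : 'I_l -> R)
    (g : T -> R) (i : 'I_l) (B : set T) (c : R) :
  is_step_fun A a g -> measurable B -> B `<=` A i ->
  exists (A' : 'I_l.+1 -> set T) (a' : 'I_l.+1 -> R),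
    is_step_fun A' a' (fun x => g x + c * \1_B x).
Proof.
move=> gA mB BA; have [mA disA _ _] := gA.
pose A' j := if unlift ord_max j is Some j'
  then (if j' == i then A i `\` B else A j') else B.
pose a' j := if unlift ord_max j is Some j' then a j' else a i + c.
have A'E j' : A' (lift ord_max j') = A j' `\` (if j' == i then B else set0).
  rewrite /A' liftK; case: eqP => [->//|_]; by rewrite setD0.
have A'max : A' ord_max = B by rewrite /A' unlift_none.
have same_cell j1 j2 x : A j1 x -> A j2 x -> j1 = j2.
  move=> A1x A2x; apply/eqP/negPn/negP => j12.
  by move/seteqP: (disA _ _ j12) => [/(_ x (conj A1x A2x))].
exists A', a'; apply: is_step_fun_of_values.
- move=> j; case: (unliftP ord_max j) => [j' ->|->]; rewrite ?A'E ?A'max //.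
  by apply: measurableD => //; case: eqP.
- move=> j1 j2 j12; apply/seteqP; split => // x []; move: j12.
  case: (unliftP ord_max j1) => [j1' ->|->]; case: (unliftP ord_max j2) => [j2' ->|->];
    rewrite ?A'E ?A'max ?eqxx //.
  + by rewrite (inj_eq lift_inj) => j12 [A1x _] [A2x _]; rewrite (same_cell _ _ _ A1x A2x) eqxx in j12.
  + by move=> _ [Ajx] + Bx; rewrite (same_cell _ _ _ Ajx (BA _ Bx)) eqxx.
  + by move=> _ Bx [Ajx]; rewrite (same_cell _ _ _ Ajx (BA _ Bx)) eqxx.
- move=> x; have [Bx|nBx] := pselect (B x); first by exists ord_max; rewrite A'max.
  have [j Ajx] := step_fun_cover gA x; exists (lift ord_max j); rewrite A'E.
  by rewrite /setD; split => //; case: (_ == _) => // -[].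
- move=> j x; case: (unliftP ord_max j) => [j' ->|->]; rewrite ?A'E ?A'max /a'.
  + rewrite liftK => -[Ajx nBx]; rewrite (step_fun_eval gA Ajx) indicE memNset ?mulr0 ?addr0 //.
    by move=> Bx; apply: nBx; rewrite (same_cell _ _ _ Ajx (BA _ Bx)) eqxx.
  + by rewrite unlift_none => Bx; rewrite indicE mem_set // mulr1 (step_fun_eval gA (BA _ Bx)).
Qed.

End StepFunctions.

Section LpNorm.
Context d (T : measurableType d) (R : realType) (mu : {measure set T -> \bar R}).
Variable p : R.

Lemma measurable_powR_norm (u : T -> R) : measurable_fun [set: T] u ->
  measurable_fun [set: T] (fun x => ((`|u x| `^ p)%:E : \bar R)).
Proof.
move=> mu_; apply/measurable_EFinP.
by apply: (@measurableT_comp _ _ _ _ _ _ (@powR R ^~ p)) => //; exact: measurableT_comp.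
Qed.

Lemma powR_Lnorm_EFin (u : T -> R) : p != 0 ->
  ((Lnorm mu p%:E (EFin \o u)) `^ p = \int[mu]_x (`|u x| `^ p)%:E)%E.
Proof. by move=> p0; rewrite powR_Lnorm. Qed.

Lemma integral_powR_norm_ge0 (u : T -> R) : (0 <= \int[mu]_x (`|u x| `^ p)%:E)%E.
Proof. by apply: integral_ge0 => x _; rewrite lee_fin powR_ge0. Qed.

Lemma Lnorm_le_pointwise (u v : T -> R) : 0 <= p ->
  measurable_fun [set: T] u -> measurable_fun [set: T] v ->
  (forall x, `|u x| <= `|v x|) ->
  (Lnorm mu p%:E (EFin \o u) <= Lnorm mu p%:E (EFin \o v))%E.
Proof.
move=> p0 mu_ mv uv; rewrite unlock /=.
apply: gt0_ler_poweR; rewrite ?invr_ge0 ?in_itv /= ?leey ?integral_powR_norm_ge0 //.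
apply: ge0_le_integral => //; try exact: measurable_powR_norm.
by move=> x _; rewrite lee_fin ge0_ler_powR.
Qed.

Lemma integral_powR_norm_gap (u v : T -> R) (B : set T) (e : R) : 1 <= p ->
  measurable B -> 0 <= e ->
  measurable_fun [set: T] u -> measurable_fun [set: T] v ->
  (forall x, `|u x| <= `|v x|) -> (forall x, B x -> `|u x| + e <= `|v x|) ->
  (\int[mu]_x (`|u x| `^ p)%:E + (e `^ p)%:E * mu B <= \int[mu]_x (`|v x| `^ p)%:E)%E.
Proof.
move=> p1 mB e0 mu_ mv uv uvB; have p0 : 0 <= p by apply: le_trans p1.
have mBe : measurable_fun [set: T] (fun x => e `^ p * \1_B x).
  by apply: measurable_funM => //; exact: measurable_indic.
have -> : ((e `^ p)%:E * mu B = \int[mu]_x (e `^ p * \1_B x)%:E)%E.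
  under eq_integral do rewrite EFinM.
  rewrite ge0_integralZl ?integral_indic ?setIT ?lee_fin ?powR_ge0 //.
  exact/measurable_EFinP/measurable_indic.
rewrite -ge0_integralD //; last 3 first.
- exact: measurable_powR_norm.
- by move=> x _; rewrite lee_fin mulr_ge0 ?powR_ge0.
- exact/measurable_EFinP.
under eq_integral do rewrite -EFinD.
apply: ge0_le_integral => //; last first.
- move=> x _; rewrite lee_fin indicE; have [/set_mem Bx|_] := boolP (x \in B).
    rewrite mulr1 (le_trans (powR_superadditive p1 (normr_ge0 _) e0)) //.
    by rewrite ge0_ler_powR ?nnegrE ?addr_ge0 ?uvB.
  by rewrite mulr0 addr0 ge0_ler_powR ?nnegrE.
- exact: measurable_powR_norm.
- by apply/measurable_EFinP/measurable_funD => //; apply/measurable_EFinP/measurable_powR_norm.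
- by move=> x _; rewrite lee_fin addr_ge0 ?mulr_ge0 ?powR_ge0.
Qed.

Lemma Lnorm_lt_pointwise (u v : T -> R) (B : set T) (e : R) : 1 <= p ->
  measurable B -> (0 < mu B)%E -> 0 < e ->
  measurable_fun [set: T] u -> measurable_fun [set: T] v ->
  (Lnorm mu p%:E (EFin \o v) < +oo)%E ->
  (forall x, `|u x| <= `|v x|) -> (forall x, B x -> `|u x| + e <= `|v x|) ->
  (Lnorm mu p%:E (EFin \o u) < Lnorm mu p%:E (EFin \o v))%E.
Proof.
move=> p1 mB muB e0 mu_ mv vfin uv uvB.
have p0 : 0 < p by apply: lt_le_trans p1.
have gap := integral_powR_norm_gap p1 mB (ltW e0) mu_ mv uv uvB.
have gap_gt0 : (0 < (e `^ p)%:E * mu B)%E by rewrite mule_gt0 // lte_fin powR_gt0.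
have Iv_fin : (\int[mu]_x (`|v x| `^ p)%:E < +oo)%E.
  by rewrite -powR_Lnorm_EFin ?gt_eqF // poweR_lty.
have Iu_fin : (\int[mu]_x (`|u x| `^ p)%:E)%E \is a fin_num.
  rewrite ge0_fin_numE ?integral_powR_norm_ge0 //; apply: le_lt_trans Iv_fin.
  by apply: le_trans gap; rewrite leeDl // ltW.
rewrite ltNge; apply/negP => /(gt0_ler_poweR (ltW p0)).
rewrite !powR_Lnorm_EFin ?gt_eqF // !in_itv /= !leey !Lnorm_ge0 => /(_ isT isT) Ivu.
by move: (le_trans gap Ivu); rewrite leNgt lteDl ?gap_gt0.
Qed.

Lemma inLpB (u v : T -> R) : 1 <= p ->
  inLp mu p u -> inLp mu p v -> inLp mu p (u \- v).
Proof.
move=> p1 [mu_ ufin] [mv vfin]; split; first exact: measurable_funB.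
have mNv : measurable_fun [set: T] (-%R \o v) by exact: measurableT_comp.
apply: le_lt_trans (minkowski_EFin mu mu_ mNv p1) _.
have -> : EFin \o (-%R \o v) = (\- (EFin \o v))%E by [].
by rewrite oppe_Lnorm lte_add_pinfty.
Qed.

Lemma inLp_le_pointwise (u v : T -> R) : 0 <= p ->
  measurable_fun [set: T] u -> inLp mu p v -> (forall x, `|u x| <= `|v x|) ->
  inLp mu p u.
Proof.
move=> p0 mu_ [mv vfin] uv; split => //.
exact: le_lt_trans (Lnorm_le_pointwise p0 mu_ mv uv) vfin.
Qed.

End LpNorm.

Lemma GpkP d (T : measurableType d) (R : realType) (mu : {measure set T -> \bar R})
    (p : R) (k : nat) (h : T -> R) :
  Gpk mu p k h <->
  inLp mu p h /\ exists l (A : 'I_l -> set T) (a : 'I_l -> R),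
    (l <= k)%N /\ is_step_fun A a h.
Proof.
split=> [[hLp [l [A [a [lk mA disA covA hE]]]]]|[hLp [l [A [a [lk [mA disA covA hE]]]]]]];
  by split=> //; exists l, A, a.
Qed.

Section BestStepApproximation.
Context d (T : measurableType d) (R : realType) (mu : {measure set T -> \bar R}).
Variables (f : T -> R) (l : nat) (A : 'I_l -> set T) (a : 'I_l -> R).

Definition gap_set (i : 'I_l) (n : nat) (s : bool) : set T :=
  A i `&` [set x | n.+1%:R^-1 <= (-1) ^+ s * (f x - a i)].

Lemma measurable_gap_set i n s : measurable_fun [set: T] f -> measurable (A i) ->
  measurable (gap_set i n s).
Proof.
move=> mf mA; apply: measurableI => //; rewrite -(setTI [set x | _]) -preimage_itvcy.
by apply: measurable_funM => //; exact: measurable_funB.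
Qed.

Lemma ae_eq_step_fun (g : T -> R) : measurable_fun [set: T] f -> is_step_fun A a g ->
  (forall i n s, mu (gap_set i n s) = 0) -> {ae mu, forall x, f x = g x}.
Proof.
move=> mf gA null; have [mA _ _ _] := gA.
have : {ae mu, forall x, forall n i s, ~ gap_set i n s x}.
  apply: ae_foralln => n; apply: filter_forall => i; apply: filter_forall => s.
  exists (gap_set i n s); split => //; last by move=> x /= /contrapT.
  exact: measurable_gap_set.
apply: filterS => x nogap; have [j Ajx] := step_fun_cover gA x.
rewrite (step_fun_eval gA Ajx); apply: contrapT => /eqP fxa.
have t_gt0 : 0 < `|f x - a j| by rewrite normr_gt0 subr_eq0.
apply: (nogap (Num.Def.trunc `|f x - a j|^-1) j (f x - a j < 0)); split=> //=.
rewrite -normrEsign -[leRHS]invrK lef_pV2 ?posrE ?invr_gt0 //.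
exact/ltW/truncnS_gt.
Qed.

Lemma Lnorm_lt_step_refine (p : R) (k : nat) (g : T -> R) i n s :
  1 <= p -> inLp mu p f -> inLp mu p g -> (l < k)%N -> is_step_fun A a g ->
  mu (gap_set i n s) != 0 ->
  exists h, Gpk mu p k h /\
    (Lnorm mu p%:E (EFin \o (f \- h)%R) < Lnorm mu p%:E (EFin \o (f \- g)%R))%E.
Proof.
move=> p1 fLp gLp lk gA B_neq0; have [mA _ _ _] := gA.
have p0 : 0 <= p by apply: le_trans p1.
have [[mf _] [mg _]] := (fLp, gLp).
set B := gap_set i n s; set e : R := n.+1%:R^-1; set c := (-1) ^+ s * e.
have mB : measurable B by exact: measurable_gap_set.
have [A' [a' hA]] := is_step_fun_addr_indic c gA mB (fun x (Bx : B x) => Bx.1).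
set h := fun x => g x + c * \1_B x.
have mh : measurable_fun [set: T] h.
  by apply: measurable_funD => //; apply: measurable_funM => //; exact: measurable_indic.
have e_gt0 : 0 < e by rewrite invr_gt0.
have normc : `|c| = e by rewrite normrMsign ger0_norm ?ltW.
have gapB x : B x -> `|(f \- h) x| + e <= `|(f \- g) x|.
  move=> [Aix eft]; rewrite /= /h indicE mem_set // mulr1 (step_fun_eval gA Aix).
  rewrite opprD addrA -normc; apply: normB_addr_le.
    by rewrite mulrAC mulr_ge0 ?(le_trans (ltW e_gt0)).
  by rewrite normc (le_trans eft) // -(normrMsign s) ler_norm.
have le_fhg x : `|(f \- h) x| <= `|(f \- g) x|.
  have [Bx|nBx] := pselect (B x); first by rewrite (le_trans _ (gapB x Bx)) ?lerDl ?ltW.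
  by rewrite /= /h indicE memNset // mulr0 addr0.
have fgLp := inLpB p1 fLp gLp.
have fhLp : inLp mu p (f \- h) by apply: inLp_le_pointwise le_fhg => //; exact: measurable_funB.
exists h; split.
  apply/GpkP; split; last by exists l.+1, A', a'.
  have -> : h = f \- (f \- h) by apply/funext => x /=; rewrite opprB addrC subrK.
  exact: inLpB.
apply: (Lnorm_lt_pointwise p1 mB _ e_gt0) => //; first by rewrite lt0e B_neq0 measure_ge0.
- exact: measurable_funB.
- exact: measurable_funB.
- by case: fgLp.
Qed.

End BestStepApproximation.

Theorem proposition2p16 (d : measure_display) (T : measurableType d)
  (R : realType) (mu : {measure set T -> \bar R})
  (mu_nz : mu [set: T] != 0%E)
  (p : R) (p1 : 1 <= p) (f : T -> R) (hf : inLp mu p f)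
  (m k : nat) (m1 : (1 <= m)%N) (mk : (m < k)%N) :
  (exists g, Gpk mu p m g /\ Lnorm mu p%:E (EFin \o (f \- g)) = Dpk mu p k f) ->
  exists h, Gpk mu p m h /\ {ae mu, forall x, f x = h x}.
Proof.
move=> [g [Gg g_opt]]; exists g; split => //.
have /GpkP [gLp [l [A [a [lm gA]]]]] := Gg.
apply: (ae_eq_step_fun hf.1 gA) => i n s; apply/eqP/contraT => B_neq0.
have [h [Gh h_lt]] := Lnorm_lt_step_refine p1 hf gLp (leq_ltn_trans lm mk) gA B_neq0.
have : (Dpk mu p k f <= Lnorm mu p%:E (EFin \o (f \- h)%R))%E.
  by apply: ereal_inf_lbound; exists h.
by rewrite -g_opt leNgt h_lt.
Qed.
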